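(* Let $z,w>0$ be such that $\mathrm{DAG}(z,w)<\infty$, let $G=(V,E)$ be a random labelled DAG drawn from the Boltzmann model with parameters $(z,w)$, and condition on its root-layering being a given ordered partition $(V_1,\dots,V_k)$. Then, conditionally, the edge set $E$ has the following distribution: there are no edges from $V_j$ to $V_i$ for $i\le j$; for every pair $(x,y)$ with $x\in V_i$, $y\in V_j$ and $j\ge i+2$, the edge $(x,y)$ is present with probability $\frac{w}{1+w}$; for every $i\in\{1,\dots,k-1\}$ and every $y\in V_{i+1}$, the set of in-neighbours of $y$ in $V_i$ is distributed as a random subset of $V_i$ obtained by including each element independently with probability $\frac{w}{1+w}$, conditioned on being non-empty (equivalently, such subsets are redrawn until at least one edge is present); and all these random choices are mutually independent.
   Context: A labelled DAG with $n$ vertices is a directed acyclic graph on vertex set $\{1,\dots,n\}$; $v(G)$, $e(G)$ denote its numbers of vertices and edges; a source is a vertex of in-degree $0$. $\mathrm{DAG}(z,w)=\sum_G \frac{z^{v(G)}w^{e(G)}}{(1+w)^{\binom{v(G)}{2}}v(G)!}$ over all labelled DAGs. The Boltzmann model with parameters $(z,w)$ assigns probability $\frac{z^{v(G)}w^{e(G)}}{(1+w)^{\binom{v(G)}{2}}v(G)!\,\mathrm{DAG}(z,w)}$ to each labelled DAG $G$. The root-layering of a DAG $G=(V,E)$ is the ordered partition $(V_1,\dots,V_k)$ of $V$ where $V_i$ is the set of sources of the graph obtained from $G$ by deleting $V_1\cup\dots\cup V_{i-1}$. *)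

From HB Require Import structures.
From mathcomp Require Import all_boot all_order all_algebra.
From mathcomp Require Import all_classical all_reals all_analysis.
Set Implicit Arguments. Unset Strict Implicit. Unset Printing Implicit Defensive.
Import Order.TTheory GRing.Theory Num.Theory numFieldNormedType.Exports.
Local Open Scope ring_scope.

(* A labelled digraph on n vertices is identified with its set of directed
   edges E : {set 'I_n * 'I_n}; vertices are labelled 0..n-1 (instead of 1..n). *)

Definition edge_rel n (E : {set 'I_n * 'I_n}) : rel 'I_n := fun a b => (a, b) \in E.

Definition is_dag n (E : {set 'I_n * 'I_n}) : bool :=
  [forall x, forall y, ((x, y) \in E) ==> ~~ connect (edge_rel E) y x].

Definition sources_in n (E : {set 'I_n * 'I_n}) (Rm : {set 'I_n}) : {set 'I_n} :=
  [set v in Rm | [forall u in Rm, (u, v) \notin E]].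

Fixpoint layers_aux n (E : {set 'I_n * 'I_n}) (fuel : nat) (Rm : {set 'I_n})
  : seq {set 'I_n} :=
  match fuel with
  | 0 => [::]
  | fuel'.+1 =>
      if Rm == finset.set0 then [::]
      else sources_in E Rm :: layers_aux E fuel' (Rm :\: sources_in E Rm)
  end.

(* root-layering (V_1,...,V_k) of a DAG; n+1 rounds always suffice for a DAG *)
Definition root_layering n (E : {set 'I_n * 'I_n}) : seq {set 'I_n} :=
  layers_aux E n.+1 finset.setT.

Definition ordered_partition n (L : seq {set 'I_n}) : Prop :=
  [/\ all (fun V => V != finset.set0) L,
      (forall i j, (i < j < size L)%N -> [disjoint nth finset.set0 L i & nth finset.set0 L j])
    & \bigcup_(V <- L) V = finset.setT].

Definition bweight (R : realType) (z w : R) n (E : {set 'I_n * 'I_n}) : R :=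
  z ^+ n * w ^+ #|E| / ((1 + w) ^+ 'C(n, 2) * n`!%:R).

Definition dag_term (R : realType) (z w : R) (n : nat) : R :=
  \sum_(E : {set 'I_n * 'I_n} | is_dag E) bweight z w E.

Definition DAGzw (R : realType) (z w : R) : R := limn (series (dag_term z w)).

Definition bprob (R : realType) (z w : R) n (E : {set 'I_n * 'I_n}) : R :=
  if is_dag E then bweight z w E / DAGzw z w else 0.

Definition prob_layering (R : realType) (z w : R) n (L : seq {set 'I_n}) : R :=
  \sum_(E : {set 'I_n * 'I_n} | root_layering E == L) bprob z w E.

Definition cond_prob (R : realType) (z w : R) n (L : seq {set 'I_n})
  (E : {set 'I_n * 'I_n}) : R :=
  (if root_layering E == L then bprob z w E else 0) / prob_layering z w L.

(* index (0-based) of the block of L containing x *)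
Definition layer_of n (L : seq {set 'I_n}) (x : 'I_n) : nat :=
  find (fun V : {set 'I_n} => x \in V) L.

Definition cond_law (R : realType) (w : R) n (L : seq {set 'I_n})
  (E : {set 'I_n * 'I_n}) : R :=
  let p := w / (1 + w) in
  let lay := layer_of L in
  if [exists x, exists y, ((x, y) \in E) && (lay y <= lay x)%N] then 0 else
  (\prod_(x : 'I_n) \prod_(y : 'I_n | ((lay x).+2 <= lay y)%N)
      (if (x, y) \in E then p else 1 - p)) *
  (\prod_(y : 'I_n | (0 < lay y)%N)
     let Vi := nth finset.set0 L (lay y).-1 in
     let N := [set x in Vi | (x, y) \in E] in
     if N == finset.set0 then 0
     else p ^+ #|N| * (1 - p) ^+ (#|Vi| - #|N|) / (1 - (1 - p) ^+ #|Vi|)).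

From HB Require Import structures.
From mathcomp Require Import all_boot all_order all_algebra.
From mathcomp Require Import all_classical all_reals all_analysis.
From mathcomp Require Import zify ring.
Import Order.TTheory GRing.Theory Num.Theory numFieldNormedType.Exports.
Local Open Scope ring_scope.
Set Implicit Arguments. Unset Strict Implicit. Unset Printing Implicit Defensive.

(* Peeling off sources layer by layer shows that L is the root-layering of E exactly when
   every edge of E goes to a strictly later layer and every vertex outside the first layer
   has an in-neighbour in the previous one; such an E is acyclic, so conditioned on the
   layering the Boltzmann probability of E is proportional to w^|E|.  The claimed law is a
   product over the vertices y of laws of the in-neighbourhood of y, each summing to one
   over all subsets, hence it is a probability distribution; since p = w (1 - p), on the
   edge sets with root-layering L it is also w^|E| times a constant.  Two probability
   distributions with proportional weights coincide. *)

Section RootLayering.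
Variables (n : nat) (L : seq {set 'I_n}).
Local Notation lay := (layer_of L).
Local Notation layer i := (nth finset.set0 L i).

Definition is_root_layering (E : {set 'I_n * 'I_n}) : bool :=
  [forall x, forall y, ((x, y) \in E) ==> (lay x < lay y)%N] &&
  [forall y, (0 < lay y)%N ==> [exists x, (lay x == (lay y).-1) && ((x, y) \in E)]].

Lemma is_root_layering_dag E : is_root_layering E -> is_dag E.
Proof.
case/andP => /forallP up _.
have up' x y : (x, y) \in E -> (lay x < lay y)%N by move=> /(implyP (forallP (up x) y)).
have mono a b : connect (edge_rel E) a b -> (lay a <= lay b)%N.
  move=> /connectP [s]; elim: s a => [|c s IH] a /= => [_ -> //|/andP [ac /IH]].
  by move=> /[apply]; apply/leq_trans/ltnW/up'.
apply/forallP => x; apply/forallP => y; apply/implyP => /up' xy.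
by apply/negP => /mono; rewrite leqNgt xy.
Qed.

Hypothesis HL : ordered_partition L.

Lemma nth_layer_neq0 i : (i < size L)%N -> layer i != finset.set0.
Proof. by case: HL => /(all_nthP finset.set0) + _ _; apply. Qed.

Lemma has_layer x : has (fun V : {set 'I_n} => x \in V) L.
Proof.
case: HL => _ _ cover.
have : x \in \bigcup_(V <- L) V by rewrite cover inE.
elim: (L) => [|V s IH]; first by rewrite big_nil inE.
by rewrite big_cons inE /= => /orP [->|/IH ->] //; rewrite orbT.
Qed.

Lemma layer_of_lt x : (lay x < size L)%N.
Proof. by rewrite /layer_of -has_find has_layer. Qed.

Lemma layer_of_pred_lt x : ((lay x).-1 < size L)%N.
Proof. exact: leq_ltn_trans (leq_pred _) (layer_of_lt x). Qed.

Lemma mem_layer_of x : x \in layer (lay x).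
Proof. exact: nth_find (has_layer x). Qed.

Lemma mem_layer x i : (i < size L)%N -> (x \in layer i) = (lay x == i).
Proof.
move=> iL; apply/idP/eqP => [xi|<-]; last exact: mem_layer_of.
case: (ltngtP (lay x) i) => // [lt|gt].
- case: HL => _ disj _; have := disj _ _ (introT andP (conj lt iL)).
  by move/disjointFr => /(_ x (mem_layer_of x)); rewrite xi.
- by have := before_find finset.set0 gt; rewrite xi.
Qed.

Lemma size_layering : (size L <= n)%N.
Proof.
suff sub : {subset iota 0 (size L) <= map lay (enum 'I_n)}.
  by have := uniq_leq_size (iota_uniq 0 (size L)) sub; rewrite size_iota size_map size_enum_ord.
move=> i; rewrite mem_iota add0n /= => iL.
have /set0Pn [x xi] := nth_layer_neq0 iL.
by apply/mapP; exists x; rewrite ?mem_enum //; apply/eqP; rewrite eq_sym -(mem_layer _ iL).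
Qed.

Definition upper_layers k : {set 'I_n} := [set x | (k <= lay x)%N].

Lemma upper_layers0 : upper_layers 0 = finset.setT.
Proof. by apply/setP => x; rewrite !inE. Qed.

Lemma upper_layers_eq0 k : (upper_layers k == finset.set0) = (size L <= k)%N.
Proof.
apply/idP/idP => [/eqP empty|Lk].
- rewrite leqNgt; apply/negP => kL.
  have /set0Pn [x xk] := nth_layer_neq0 kL.
  have : x \in upper_layers k by rewrite inE -(eqP (_ : lay x == k)) // -(mem_layer _ kL).
  by rewrite empty inE.
- apply/eqP/setP => x; rewrite !inE; apply/negbTE; rewrite -ltnNge.
  exact: leq_trans (layer_of_lt x) Lk.
Qed.

Lemma upper_layersS k : (k < size L)%N -> upper_layers k :\: layer k = upper_layers k.+1.
Proof.
by move=> kL; apply/setP => x; rewrite !inE (mem_layer _ kL) ltn_neqAle eq_sym.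
Qed.

Variable E : {set 'I_n * 'I_n}.

Definition layers_are_sources :=
  forall k, (k < size L)%N -> sources_in E (upper_layers k) = layer k.

Lemma layers_aux_upper : layers_are_sources ->
  forall fuel k, layers_aux E fuel (upper_layers k) = take fuel (drop k L).
Proof.
move=> src; elim=> [|fuel IH] k /=; first by rewrite take0.
rewrite upper_layers_eq0; case: leqP => kL; first by rewrite drop_oversize.
by rewrite src // upper_layersS // IH (drop_nth finset.set0 kL).
Qed.

Lemma layers_aux_upper_sources fuel k :
  layers_aux E fuel (upper_layers k) = drop k L ->
  forall j, (k <= j < size L)%N -> sources_in E (upper_layers j) = layer j.
Proof.
elim: fuel k => [|fuel IH] k /=.
  by move=> /esym/(congr1 size); rewrite size_drop => /eqP; rewrite subn_eq0; lia.
rewrite upper_layers_eq0; case: leqP => kL; first lia.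
rewrite (drop_nth finset.set0 kL) => -[srck layers] j /andP [kj jL].
case: (ltngtP k j) kj => // [lt _|<- //].
by apply: (IH k.+1); rewrite ?lt ?jL // -upper_layersS // -srck.
Qed.

Lemma is_root_layering_sources : is_root_layering E -> layers_are_sources.
Proof.
case/andP => /forallP up /forallP parent k kL.
apply/setP => v; rewrite (mem_layer _ kL) !inE.
apply/andP/eqP => [[kv /forallP nsrc]|vk].
- case: (ltngtP k (lay v)) kv => // lt _.
  have := parent v; rewrite (leq_ltn_trans _ lt) //= => /existsP [u /andP [/eqP uv uvE]].
  by have := nsrc u; rewrite inE uv uvE /= implybF; lia.
- split; first by rewrite vk.
  apply/forallP => u; rewrite inE; apply/implyP => ku; apply/negP => uvE.
  by have := forallP (up u) v; rewrite uvE vk /=; lia.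
Qed.

Lemma sources_edge_up : layers_are_sources ->
  forall x y, (x, y) \in E -> (lay x < lay y)%N.
Proof.
move=> src x y xyE.
have : y \in sources_in E (upper_layers (lay y)) by rewrite src ?layer_of_lt ?mem_layer_of.
by rewrite inE => /andP [_ /forallP /(_ x)]; rewrite inE xyE implybF -ltnNge.
Qed.

Lemma sources_is_root_layering : layers_are_sources -> is_root_layering E.
Proof.
move=> src; apply/andP; split.
  by apply/forallP => x; apply/forallP => y; apply/implyP; apply: sources_edge_up.
apply/forallP => y; apply/implyP => y0.
have : y \notin sources_in E (upper_layers (lay y).-1).
  by rewrite src ?layer_of_pred_lt // mem_layer ?layer_of_pred_lt; lia.
rewrite inE negb_and inE leq_pred /= negb_forall => /existsP [u].
rewrite negb_imply negbK inE => /andP [yu uyE].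
apply/existsP; exists u; rewrite uyE andbT eqn_leq yu andbT.
by have := sources_edge_up src uyE; lia.
Qed.

Lemma root_layeringP : (root_layering E == L) = is_root_layering E.
Proof.
apply/eqP/idP => [rlE|].
  apply/sources_is_root_layering => k kL.
  by apply: (@layers_aux_upper_sources n.+1 0); rewrite ?drop0 ?upper_layers0 ?kL.
move/is_root_layering_sources => src.
rewrite /root_layering -upper_layers0 layers_aux_upper // drop0 take_oversize //.
exact: leq_trans size_layering (leqnSn n).
Qed.

End RootLayering.

Definition in_nbhd (I J : finType) (E : {set I * J}) (y : J) : {set I} :=
  [set x | (x, y) \in E].

Lemma sum_set_prod (R : comPzSemiRingType) (I : finType) (f : I -> bool -> R) :
  \sum_(S : {set I}) \prod_i f i (i \in S) = \prod_i (f i true + f i false).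
Proof.
under [RHS]eq_bigr do rewrite -big_bool.
rewrite bigA_distr_bigA (reindex (fun g : {ffun I -> bool} => [set i | g i])) /=.
  by apply: eq_bigr => g _; apply: eq_bigr => i _; rewrite inE.
apply: onW_bij; exists (fun S : {set I} => [ffun i => i \in S]) => [g|S].
  by apply/ffunP => i; rewrite ffunE inE.
by apply/setP => i; rewrite inE ffunE.
Qed.

Lemma sum_set_prod_nbhd (R : comPzSemiRingType) (I J : finType) (h : J -> {set I} -> R) :
  \sum_(E : {set I * J}) \prod_y h y (in_nbhd E y) = \prod_y \sum_(S : {set I}) h y S.
Proof.
rewrite bigA_distr_bigA (reindex (fun f : {ffun J -> {set I}} => [set e | e.1 \in f e.2])) /=.
  apply: eq_bigr => f _; apply: eq_bigr => y _; congr (h y _).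
  by apply/setP => x; rewrite !inE.
apply: onW_bij; exists (fun E : {set I * J} => [ffun y => in_nbhd E y]) => [f|E].
  by apply/ffunP => y; rewrite ffunE; apply/setP => x; rewrite !inE.
by apply/setP => -[x y]; rewrite !inE ffunE inE.
Qed.

Lemma prod_if_mem (R : comPzSemiRingType) (I : finType) (V N : {set I}) (a b : R) :
  N \subset V ->
  \prod_(x in V) (if x \in N then a else b) = a ^+ #|N| * b ^+ (#|V| - #|N|).
Proof.
move=> NV; rewrite (bigID (mem N)) /=.
rewrite (eq_bigr (fun=> a)) => [|x /andP [_ ->] //].
rewrite [X in _ * X](eq_bigr (fun=> b)) => [|x /andP [_ /negbTE ->] //].
rewrite (eq_bigl (mem N)) => [|x]; last first.
  by apply/andP/idP => [[]//|xN]; rewrite (fintype.subsetP NV).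
rewrite [X in _ * X](eq_bigl (mem (V :\: N))) => [|x]; last by rewrite !inE andbC.
by rewrite !prodr_const cardsD (finset.setIidPr NV).
Qed.

Lemma prod_if_mem0 (R : comPzSemiRingType) (I : finType) (V N : {set I}) (b : R) :
  N \subset V ->
  \prod_(x in V) (if x \in N then 0 else b) = if N == finset.set0 then b ^+ #|V| else 0.
Proof.
move=> NV; case: eqP => [->|/eqP/set0Pn [x xN]].
  by rewrite -prodr_const; apply: eq_bigr => x _; rewrite inE.
by rewrite (bigD1 x) ?(fintype.subsetP NV) //= xN mul0r.
Qed.

Section ConditionalLaw.
Variables (R : realType) (w : R) (n : nat) (L : seq {set 'I_n}).
Local Notation p := (w / (1 + w)).
Local Notation lay := (layer_of L).
Local Notation prev_layer y := (nth finset.set0 L (lay y).-1).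

(* Pairs in consecutive layers are accounted for by [parent_factor]. *)
Definition pair_factor (x y : 'I_n) (b : bool) : R :=
  if (lay y <= lay x)%N then (if b then 0 else 1)
  else if ((lay x).+2 <= lay y)%N then (if b then p else 1 - p) else 1.

(* The difference of the two products is the weight of a nonempty in-neighbourhood in the
   previous layer; writing it this way makes the sum over all neighbourhoods factor. *)
Definition parent_factor (y : 'I_n) (S : {set 'I_n}) : R :=
  if (0 < lay y)%N then
    (\prod_(x in prev_layer y) (if x \in S then p else 1 - p)
     - \prod_(x in prev_layer y) (if x \in S then 0 else 1 - p))
    / (1 - (1 - p) ^+ #|prev_layer y|)
  else 1.

Definition column_law (y : 'I_n) (S : {set 'I_n}) : R :=
  (\prod_x pair_factor x y (x \in S)) * parent_factor y S.

Lemma cond_law_columns E : cond_law w L E = \prod_y column_law y (in_nbhd E y).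
Proof.
rewrite /cond_law /=; case: ifPn => [/existsP [x /existsP [y /andP [xyE yx]]] | /existsPn up].
  rewrite (bigD1 y) //= /column_law [X in X * parent_factor _ _](bigD1 x) //=.
  by rewrite /pair_factor yx inE xyE !mul0r.
have {}up x y : (x, y) \in E -> (lay x < lay y)%N.
  by move=> xyE; move/existsPn: (up x) => /(_ y); rewrite xyE ltnNge.
rewrite big_split /=; congr (_ * _).
  rewrite [RHS]exchange_big; apply: eq_bigr => x _; rewrite [LHS]big_mkcond.
  apply: eq_bigr => y _; rewrite /pair_factor inE.
  case xyE: ((x, y) \in E); [have := up _ _ xyE|];
    by case: (leqP (lay y) (lay x)); case: (leqP (lay x).+2 (lay y)) => //=; lia.
rewrite [LHS]big_mkcond; apply: eq_bigr => y _; rewrite /parent_factor.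
case: ifP => // y0; set V := prev_layer y; set N := [set x in V | (x, y) \in E].
have NV : N \subset V by apply/fintype.subsetP => x; rewrite inE => /andP [].
have nbhdN (f : bool -> R) : \prod_(x in V) f (x \in in_nbhd E y) = \prod_(x in V) f (x \in N).
  by apply: eq_bigr => x xV; rewrite !inE xV.
rewrite (nbhdN (fun b => if b then p else 1 - p)) (nbhdN (fun b => if b then 0 else 1 - p)).
rewrite prod_if_mem // prod_if_mem0 //; case: eqP => [->|_]; last by rewrite subr0.
by rewrite cards0 expr0 mul1r subn0 subrr mul0r.
Qed.

Hypothesis HL : ordered_partition L.
Hypothesis w_gt0 : 0 < w.

Lemma mem_prev_layer x y : (0 < lay y)%N -> (x \in prev_layer y) = ((lay x).+1 == lay y).
Proof. by move=> y0; rewrite mem_layer ?layer_of_pred_lt //; lia. Qed.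

Lemma edge_odds : p = w * (1 - p).
Proof. by field; rewrite lt0r_neq0 ?addr_gt0. Qed.

Lemma pair_factor_sum x y : (lay x).+1 != lay y ->
  pair_factor x y true + pair_factor x y false = 1.
Proof.
rewrite /pair_factor => xy; case: (leqP (lay y) (lay x)) => [_|yx]; first by rewrite add0r.
by case: ifP => [_|?]; [rewrite subrKC | lia].
Qed.

Lemma pair_factor_prev x y b : (lay x).+1 = lay y -> pair_factor x y b = 1.
Proof. by rewrite /pair_factor => <-; rewrite !ltnn. Qed.

Lemma sum_column_law y : \sum_(S : {set 'I_n}) column_law y S = 1.
Proof.
rewrite /column_law /parent_factor; case: posnP => [y0|y0].
  under eq_bigr do rewrite /= mulr1.
  by rewrite (sum_set_prod (pair_factor^~ y)) big1 // => x _; rewrite pair_factor_sum ?y0.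
set V := prev_layer y; set D := 1 - (1 - p) ^+ #|V|.
have q_def : 1 - p = (1 + w)^-1 by field; rewrite lt0r_neq0 ?addr_gt0.
have D_neq0 : D != 0.
  rewrite /D subr_eq0 eq_sym lt_eqF // exprn_ilt1 -?lt0n ?card_gt0 ?nth_layer_neq0 //.
  - exact: layer_of_pred_lt.
  - by rewrite q_def invr_ge0 addr_ge0 // ltW.
  - by rewrite q_def invf_lt1 ?ltrDl // addr_gt0.
have pair_in x b : x \in V -> pair_factor x y b = 1.
  by rewrite mem_prev_layer // => /eqP; apply: pair_factor_prev.
have pair_out x : x \notin V -> pair_factor x y true + pair_factor x y false = 1.
  by rewrite mem_prev_layer //; apply: pair_factor_sum.
pose a x b : R := pair_factor x y b * (if x \in V then (if b then p else 1 - p) else 1).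
pose c x b : R := pair_factor x y b * (if x \in V then (if b then 0 else 1 - p) else 1).
rewrite (eq_bigr (fun S : {set 'I_n} => (\prod_x a x (x \in S) - \prod_x c x (x \in S)) / D)).
  rewrite -mulr_suml sumrB !sum_set_prod big1 => [|x _]; last first.
    rewrite /a; case: (boolP (x \in V)) => xV; last by rewrite !mulr1 pair_out.
    by rewrite !pair_in // !mul1r subrKC.
  rewrite (eq_bigr (fun x => if x \in V then 1 - p else 1)) => [|x _]; last first.
    rewrite /c; case: (boolP (x \in V)) => xV; last by rewrite !mulr1 pair_out.
    by rewrite !pair_in // !mul1r add0r.
  by rewrite -big_mkcond prodr_const -/D mulfV.
by move=> S _; rewrite /a /c !big_split /= -!big_mkcond mulrA mulrBr.
Qed.

Lemma sum_cond_law : \sum_E cond_law w L E = 1.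
Proof.
under eq_bigr do rewrite cond_law_columns.
by rewrite sum_set_prod_nbhd big1 // => y _; apply: sum_column_law.
Qed.

Definition column_const (y : 'I_n) : R :=
  (\prod_(x | (lay x < lay y)%N) (1 - p)) *
  (if (0 < lay y)%N then (1 - (1 - p) ^+ #|prev_layer y|)^-1 else 1).

Lemma column_law_root_layering E y : is_root_layering L E ->
  column_law y (in_nbhd E y) = (\prod_x (if (x, y) \in E then w else 1)) * column_const y.
Proof.
case/andP => /forallP up /forallP parent.
have up' x : (x, y) \in E -> (lay x < lay y)%N by apply/implyP/(forallP (up x)).
rewrite /column_law /column_const /parent_factor; case: posnP => [y0|y0] /=.
  have -> : \prod_(x | (lay x < lay y)%N) (1 - p) = 1 by rewrite big_pred0 // => x; rewrite y0.
  rewrite !mulr1 !big1 // => x _; rewrite ?/pair_factor ?y0 ?inE /=;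
  by have := up' x; case: ((x, y) \in E) => // /(_ isT); rewrite y0.
have [x0 /andP [/eqP x0y x0yE]] := existsP (implyP (parent y) y0).
rewrite [X in _ - X](bigD1 x0) /=; last by rewrite mem_prev_layer // x0y prednK.
rewrite inE x0yE mul0r subr0 [X in _ * (X / _)]big_mkcond [X in _ = _ * (X * _)]big_mkcond /=.
rewrite !mulrA -!big_split /=; congr (_ * _); apply: eq_bigr => x _.
rewrite inE mem_prev_layer // /pair_factor.
case xyE: ((x, y) \in E); [have := up' _ xyE|];
  case: (leqP (lay y) (lay x)); case: (leqP (lay x).+2 (lay y)); case: eqP => //=;
  rewrite ?mul1r ?mulr1 -?edge_odds //; lia.
Qed.

Lemma cond_law_root_layering E : is_root_layering L E ->
  cond_law w L E = w ^+ #|E| * \prod_y column_const y.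
Proof.
move=> rlE; rewrite cond_law_columns (eq_bigr _ (fun y _ => column_law_root_layering y rlE)).
rewrite big_split /= exchange_big pair_big /= -prodr_const [in RHS]big_mkcond /=.
by congr (_ * _); apply: eq_bigr => -[x y].
Qed.

Lemma cond_law_not_root_layering E : ~~ is_root_layering L E -> cond_law w L E = 0.
Proof.
rewrite /cond_law negb_and => /orP [/forallPn [x /forallPn [y]]|/forallPn [y]].
  rewrite negb_imply -leqNgt => /andP [xyE yx] /=.
  by rewrite ifT //; apply/existsP; exists x; apply/existsP; exists y; rewrite xyE.
rewrite negb_imply => /andP [y0 /existsPn noparent] /=; case: ifP => // _.
rewrite [X in _ * X](bigD1 y) //= ifT ?mul0r ?mulr0 //.
by apply/eqP/setP => x; rewrite !inE mem_layer ?layer_of_pred_lt ?(negbTE (noparent x)).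
Qed.

Lemma cond_lawE E : cond_law w L E =
  if is_root_layering L E then w ^+ #|E| * \prod_y column_const y else 0.
Proof. by case: ifPn => [/cond_law_root_layering|/cond_law_not_root_layering]. Qed.

End ConditionalLaw.

Lemma normalize_proportional (R : fieldType) (I : finType) (P : pred I) (a g : I -> R) (c M : R) :
  c != 0 -> (forall i, g i = if P i then a i * M else 0) -> \sum_i g i = 1 ->
  forall i, (if P i then c * a i else 0) / \sum_(j | P j) c * a j = g i.
Proof.
move=> c_neq0 gE sum_g i.
have SM : (\sum_(j | P j) a j) * M = 1.
  rewrite -sum_g [RHS](bigID P) /= [X in _ + X]big1 => [|j /negbTE notPj]; last by rewrite gE notPj.
  by rewrite addr0 mulr_suml; apply: eq_bigr => j Pj; rewrite gE Pj.
have S_neq0 : \sum_(j | P j) a j != 0.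
  by apply: contra_eq_neq SM => ->; rewrite mul0r eq_sym oner_neq0.
rewrite -mulr_sumr gE; case: ifP => _; last by rewrite mul0r.
have -> : M = (\sum_(j | P j) a j)^-1 by rewrite -[M]mul1r -(mulVf S_neq0) -mulrA SM mulr1.
by field; apply/andP.
Qed.

Lemma bweight_gt0 (R : realType) (z w : R) m (E : {set 'I_m * 'I_m}) :
  0 < z -> 0 < w -> 0 < bweight z w E.
Proof.
by move=> z_gt0 w_gt0; rewrite /bweight divr_gt0 ?mulr_gt0 ?exprn_gt0 ?addr_gt0 ?ltr0n ?fact_gt0.
Qed.

Lemma bweightE (R : realType) (z w : R) m (E : {set 'I_m * 'I_m}) :
  bweight z w E = bweight z w (finset.set0 : {set 'I_m * 'I_m}) * w ^+ #|E|.
Proof. by rewrite /bweight cards0 expr0 mulr1 mulrAC. Qed.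

Lemma DAGzw_gt0 (R : realType) (z w : R) :
  0 < z -> 0 < w -> cvgn (series (dag_term z w)) -> 0 < DAGzw z w.
Proof.
move=> z_gt0 w_gt0 cvg.
have term_gt0 m : 0 < dag_term z w m.
  rewrite /dag_term (bigD1 finset.set0) /=; last first.
    by apply/forallP => x; apply/forallP => y; rewrite inE.
  by rewrite ltr_wpDr ?bweight_gt0 // sumr_ge0 // => E _; rewrite ltW ?bweight_gt0.
have incr : nondecreasing_seq (series (dag_term z w)).
  by apply/nondecreasing_seqP => m; rewrite seriesSr lerDl ltW.
apply: lt_le_trans (nondecreasing_cvgn_le incr cvg 1).
by rewrite /series /= big_nat1.
Qed.

Unset Implicit Arguments.

Theorem lemma4 (R : realType) (z w : R) :
  0 < z -> 0 < w -> cvgn (series (dag_term z w)) ->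
  forall (n : nat) (L : seq {set 'I_n}), ordered_partition L ->
  forall E : {set 'I_n * 'I_n}, cond_prob z w L E = cond_law w L E.
Proof.
move=> z_gt0 w_gt0 cvg n L HL E.
pose c := bweight z w (finset.set0 : {set 'I_n * 'I_n}) / DAGzw z w.
have c_neq0 : c != 0 by rewrite lt0r_neq0 // divr_gt0 ?bweight_gt0 ?DAGzw_gt0.
have bprobE E' : is_root_layering L E' -> bprob z w E' = c * w ^+ #|E'|.
  by move=> /is_root_layering_dag dagE; rewrite /bprob dagE bweightE mulrAC.
rewrite /cond_prob /prob_layering (root_layeringP HL) (eq_bigl _ _ (root_layeringP HL)).
rewrite (eq_bigr _ bprobE).
have -> : (if is_root_layering L E then bprob z w E else 0) =
          (if is_root_layering L E then c * w ^+ #|E| else 0) by case: ifP => // /bprobE.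
exact: normalize_proportional c_neq0 (cond_lawE HL w_gt0) (sum_cond_law HL w_gt0) E.
Qed.
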